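(* In the Standing Setup with $R=-v(X-w)$ ($v,w\in\mathbb F$), for every $h\in\mathbb Z$: $$d_{h-1}d_hd_{h+1}=-v(e_h+w),$$ $$e_h+e_{h+1}+v_h=\frac{v}{d_hd_{h+1}},\qquad e_he_{h+1}-w_h=-\frac{vw}{d_hd_{h+1}} .$$
   Context: Standing Setup. $\mathbb F$ is a field of characteristic not $2$ or $3$; $f,g\in\mathbb F$; $A=X^3+fX+g\in\mathbb F[X]$; $R\in\mathbb F[X]$ is a polynomial of degree at most $2$; $D=A^2+4R$; $Y$ satisfies $Y^2=D(X)$, $Z=\tfrac12(Y+A)$ and $\overline Z=\tfrac12(-Y+A)$, so $Z+\overline Z=A$ and $Z\overline Z=-R$. We are given sequences $(u_h),(v_h),(w_h),(d_h),(e_h)$ of elements of $\mathbb F$ indexed by $h\in\mathbb Z$, with all $u_h\neq0$, such that for every $h\in\mathbb Z$ the following two identities hold in $\mathbb F[X]$: (i) $A+d_h(X+e_h)+d_{h+1}(X+e_{h+1})=(X+v_h)(X^2-v_hX+w_h)$; (ii) $-u_hu_{h+1}(X^2-v_hX+w_h)(X^2-v_{h+1}X+w_{h+1})=d_{h+1}^2(X+e_{h+1})^2+d_{h+1}(X+e_{h+1})A-R$. (These say that $Z_h=\bigl(Z+d_h(X+e_h)\bigr)/\bigl(u_h(X^2-v_hX+w_h)\bigr)$ are consecutive complete quotients of a continued fraction expansion with partial quotients $(X+v_h)/u_h$.) *)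

From HB Require Import structures.
From mathcomp Require Import all_boot all_order all_algebra.
Set Implicit Arguments. Unset Strict Implicit. Unset Printing Implicit Defensive.
Import Order.TTheory GRing.Theory Num.Theory.
Local Open Scope ring_scope.

Definition cubicA (F : fieldType) (f g : F) : {poly F} :=
  'X^3 + f%:P * 'X + g%:P.

From HB Require Import structures.
From mathcomp Require Import all_boot all_order all_algebra.
From mathcomp Require Import ring.
Import Order.TTheory GRing.Theory Num.Theory.

Set Implicit Arguments.
Unset Strict Implicit.

Local Open Scope ring_scope.

(* Comparing coefficients in (i) and (ii) shows that the denominator of the
   next complete quotient is determined by the current one,
   X^2 - v_(h+1) X + w_(h+1) = (X + e_(h+1)) (X + v_h) - d_h,
   and that d_h d_(h+1) (v_h + e_h + e_(h+1)) = v and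
   d_h d_(h+1) (e_h e_(h+1) - w_h) = - v w.  The leading coefficient of (ii)
   is d_(h+1) = - u_h u_(h+1), which is nonzero, so these relations give the
   last two identities; the first one is the combination - v e_h - v w of
   them, simplified by the expressions of v_h and w_h from the previous step. *)

Lemma eq_of_sub_eq (V : zmodType) (x y x' y' : V) :
  x' = y' -> x - y = x' - y' -> x = y.
Proof. by move=> eq_x'y' eq_diff; apply/eqP; rewrite -subr_eq0 eq_diff eq_x'y' subrr. Qed.

Lemma quartic_coef_inj (R : nzRingType) (a0 a1 a2 a3 a4 b0 b1 b2 b3 b4 : R) :
  a4%:P * 'X^4 + a3%:P * 'X^3 + a2%:P * 'X^2 + a1%:P * 'X + a0%:P
    = b4%:P * 'X^4 + b3%:P * 'X^3 + b2%:P * 'X^2 + b1%:P * 'X + b0%:P ->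
  [/\ a0 = b0, a1 = b1, a2 = b2, a3 = b3 & a4 = b4].
Proof.
move=> eq_ab; have coef_ab i := congr1 (fun p : {poly R} => p`_i) eq_ab.
by split; [move: (coef_ab 0%N) | move: (coef_ab 1%N) | move: (coef_ab 2%N)
          | move: (coef_ab 3%N) | move: (coef_ab 4%N)];
  rewrite !(coefD, coefCM, coefXn, coefX, coefC) /= !mulr0 ?mulr1 !addr0 ?add0r.
Qed.

Section CoefficientIdentities.

Variables (F : fieldType) (f g : F).

Lemma cubic_identity_coefs (d0 e0 d1 e1 a b : F) :
  cubicA f g + d0%:P * ('X + e0%:P) + d1%:P * ('X + e1%:P)
    = ('X + a%:P) * ('X^2 - a%:P * 'X + b%:P) ->
  f + d0 + d1 = b - a ^+ 2 /\ g + d0 * e0 + d1 * e1 = a * b.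
Proof.
have -> : cubicA f g + d0%:P * ('X + e0%:P) + d1%:P * ('X + e1%:P)
    = 0%:P * 'X^4 + 1%:P * 'X^3 + 0%:P * 'X^2 + (f + d0 + d1)%:P * 'X
      + (g + d0 * e0 + d1 * e1)%:P by rewrite /cubicA; ring.
have -> : ('X + a%:P) * ('X^2 - a%:P * 'X + b%:P)
    = 0%:P * 'X^4 + 1%:P * 'X^3 + 0%:P * 'X^2 + (b - a ^+ 2)%:P * 'X
      + (a * b)%:P by ring.
by case/quartic_coef_inj.
Qed.

Lemma quartic_identity_coefs (c a b a' b' d E v w : F) :
  c%:P * ('X^2 - a%:P * 'X + b%:P) * ('X^2 - a'%:P * 'X + b'%:P)
    = (d ^+ 2)%:P * ('X + E%:P) ^+ 2 + d%:P * ('X + E%:P) * cubicA f g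
      - - (v%:P * ('X - w%:P)) ->
  [/\ c * (b * b') = d ^+ 2 * E ^+ 2 + d * E * g - v * w,
      - c * (a * b' + a' * b) = 2 * d ^+ 2 * E + d * g + d * E * f + v,
      c * (b + b' + a * a') = d ^+ 2 + d * f,
      - c * (a + a') = d * E
    & c = d].
Proof.
have -> : c%:P * ('X^2 - a%:P * 'X + b%:P) * ('X^2 - a'%:P * 'X + b'%:P)
    = c%:P * 'X^4 + (- c * (a + a'))%:P * 'X^3 + (c * (b + b' + a * a'))%:P * 'X^2
      + (- c * (a * b' + a' * b))%:P * 'X + (c * (b * b'))%:P by ring.
have -> : (d ^+ 2)%:P * ('X + E%:P) ^+ 2 + d%:P * ('X + E%:P) * cubicA f g
      - - (v%:P * ('X - w%:P))
    = d%:P * 'X^4 + (d * E)%:P * 'X^3 + (d ^+ 2 + d * f)%:P * 'X^2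
      + (2 * d ^+ 2 * E + d * g + d * E * f + v)%:P * 'X
      + (d ^+ 2 * E ^+ 2 + d * E * g - v * w)%:P by rewrite /cubicA; ring.
exact: quartic_coef_inj.
Qed.

End CoefficientIdentities.

Lemma next_quotient_coefs (F : fieldType) (f g v w d0 e0 d e a b a' b' : F) :
  d != 0 ->
  f + d0 + d = b - a ^+ 2 -> g + d0 * e0 + d * e = a * b ->
  d * (b * b') = d ^+ 2 * e ^+ 2 + d * e * g - v * w ->
  - d * (a * b' + a' * b) = 2 * d ^+ 2 * e + d * g + d * e * f + v ->
  d * (b + b' + a * a') = d ^+ 2 + d * f ->
  - d * (a + a') = d * e ->
  [/\ a' = - a - e, b' = a * e - d0,
      v = d * d0 * (a + e0 + e) & - (v * w) = d * d0 * (e0 * e - b)].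
Proof.
move=> d_neq0 cubic1 cubic0 quartic0 quartic1 quartic2 quartic3.
have eq_f : f = b - a ^+ 2 - d0 - d by rewrite -cubic1; ring.
have eq_g : g = a * b - d0 * e0 - d * e by rewrite -cubic0; ring.
subst f g.
have eq_a' : a' = - a - e.
  by apply: (mulfI d_neq0); apply: (eq_of_sub_eq (esym quartic3)); ring.
subst a'.
have eq_b' : b' = a * e - d0.
  by apply: (mulfI d_neq0); apply: (eq_of_sub_eq quartic2); ring.
subst b'.
split=> //.
- by apply: (eq_of_sub_eq (esym quartic1)); ring.
- by apply: (eq_of_sub_eq (esym quartic0)); ring.
Qed.

Section ConsecutiveQuotients.

Variables (F : fieldType) (f g v w : F) (u vs ws d e : int -> F).

Hypothesis hu : forall h : int, u h != 0.

Hypothesis hi : forall h : int,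
  cubicA f g + (d h)%:P * ('X + (e h)%:P)
    + (d (h + 1))%:P * ('X + (e (h + 1))%:P)
  = ('X + (vs h)%:P) * ('X^2 - (vs h)%:P * 'X + (ws h)%:P).

Hypothesis hii : forall h : int,
  - ((u h * u (h + 1))%:P)
    * ('X^2 - (vs h)%:P * 'X + (ws h)%:P)
    * ('X^2 - (vs (h + 1))%:P * 'X + (ws (h + 1))%:P)
  = (d (h + 1) ^+ 2)%:P * ('X + (e (h + 1))%:P) ^+ 2
    + (d (h + 1))%:P * ('X + (e (h + 1))%:P) * cubicA f g
    - (- (v%:P * ('X - w%:P))).

Lemma d_succ_eq (h : int) : d (h + 1) = - (u h * u (h + 1)).
Proof. by have := hii h; rewrite -polyCN => /quartic_identity_coefs[]. Qed.

Lemma d_neq0 (h : int) : d h != 0.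
Proof. by rewrite -(subrK 1 h) d_succ_eq oppr_eq0 mulf_neq0. Qed.

Lemma quotient_step (h : int) :
  [/\ vs (h + 1) = - vs h - e (h + 1),
      ws (h + 1) = vs h * e (h + 1) - d h,
      v = d (h + 1) * d h * (vs h + e h + e (h + 1))
    & - (v * w) = d (h + 1) * d h * (e h * e (h + 1) - ws h)].
Proof.
have [cubic1 cubic0] := cubic_identity_coefs (hi h).
have := hii h; rewrite -polyCN -d_succ_eq.
case/quartic_identity_coefs=> quartic0 quartic1 quartic2 quartic3 _.
exact: next_quotient_coefs (d_neq0 _) cubic1 cubic0 quartic0 quartic1 quartic2 quartic3.
Qed.

End ConsecutiveQuotients.

Theorem mainTheorem7 (F : fieldType)
  (hchar2 : 2%N \notin [pchar F]) (hchar3 : 3%N \notin [pchar F])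
  (f g v w : F)
  (u vs ws d e : int -> F)
  (hu : forall h : int, u h != 0)
  (hi : forall h : int,
      cubicA f g + (d h)%:P * ('X + (e h)%:P)
        + (d (h + 1))%:P * ('X + (e (h + 1))%:P)
      = ('X + (vs h)%:P) * ('X^2 - (vs h)%:P * 'X + (ws h)%:P))
  (hii : forall h : int,
      - ((u h * u (h + 1))%:P)
        * ('X^2 - (vs h)%:P * 'X + (ws h)%:P)
        * ('X^2 - (vs (h + 1))%:P * 'X + (ws (h + 1))%:P)
      = (d (h + 1) ^+ 2)%:P * ('X + (e (h + 1))%:P) ^+ 2
        + (d (h + 1))%:P * ('X + (e (h + 1))%:P) * cubicA f g
        - (- (v%:P * ('X - w%:P))))
  : forall h : int,
      d (h - 1) * d h * d (h + 1) = - v * (e h + w)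
      /\ e h + e (h + 1) + vs h = v / (d h * d (h + 1))
      /\ e h * e (h + 1) - ws h = - (v * w) / (d h * d (h + 1)).
Proof.
move=> h.
have [_ _ v_eq vw_eq] := quotient_step hu hi hii h.
have [vs_eq ws_eq _ _] := quotient_step hu hi hii (h - 1).
rewrite subrK in vs_eq ws_eq.
have dh_neq0 := d_neq0 hu hii h.
have dh1_neq0 := d_neq0 hu hii (h + 1).
split; [|split].
- rewrite mulrDr (mulNr v w) vw_eq v_eq ws_eq vs_eq; ring.
- by rewrite v_eq; field; rewrite dh_neq0 dh1_neq0.
- by rewrite vw_eq; field; rewrite dh_neq0 dh1_neq0.
Qed.
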